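(* The free energy $\mathcal{F}$ is lower semicontinuous in the weak $L^1$ topology: if $n=(n_A,n_B,n_C)$ and $n_k=(n_{k,A},n_{k,B},n_{k,C})$, $k=1,2,\dots$, are profiles such that for each $\alpha\in\{A,B,C\}$ the sequence $n_{k,\alpha}$ converges weakly in $L^1([0,1])$ to $n_\alpha$, then $\liminf_{k\to\infty}\mathcal{F}(\{n_k\})\ge\mathcal{F}(\{n\})$.
   Context: A profile is a triple $(n_A,n_B,n_C)$ of measurable functions on $[0,1]$ with values in $[0,1]$. A sequence $f_k\in L^1([0,1])$ converges weakly to $f$ if $\int_0^1f_k\phi\,dx\to\int_0^1f\phi\,dx$ for every bounded measurable $\phi$. For $\beta>0$ fixed, $\mathcal{F}(\{n\})=\beta\int_0^1dx\int_x^1dz\,[n_A(x)n_C(z)+n_B(x)n_A(z)+n_C(x)n_B(z)]+\int_0^1\sum_{\alpha}n_\alpha(x)\ln n_\alpha(x)\,dx$ with $0\ln0=0$. *)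

From HB Require Import structures.
From mathcomp Require Import all_boot all_order all_algebra.
From mathcomp Require Import all_classical all_reals all_analysis.
Set Implicit Arguments. Unset Strict Implicit. Unset Printing Implicit Defensive.
Import Order.TTheory GRing.Theory Num.Theory.
Import numFieldNormedType.Exports.
Local Open Scope classical_set_scope.
Local Open Scope ring_scope.

Definition xlnx {R : realType} (x : R) : R := if x == 0 then 0 else x * ln x.

Definition profile_comp {R : realType} (f : R -> R) : Prop :=
  measurable_fun (`[0%R, 1%R] : set R) f /\ (forall x, `[0%R, 1%R]%classic x -> 0 <= f x <= 1).

Definition weakL1_cvg {R : realType} (fk : nat -> R -> R) (f : R -> R) : Prop :=
  forall phi : R -> R, measurable_fun (`[0%R, 1%R] : set R) phi ->
    (exists M : R, forall x, `[0%R, 1%R]%classic x -> `|phi x| <= M) ->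
    (fun k => Rintegral (@lebesgue_measure R) `[0%R, 1%R]%classic (fun x => fk k x * phi x))
      @ \oo --> Rintegral (@lebesgue_measure R) `[0%R, 1%R]%classic (fun x => f x * phi x).

Definition free_energy {R : realType} (beta : R) (nA nB nC : R -> R) : R :=
  beta * Rintegral (@lebesgue_measure R) `[0%R, 1%R]
           (fun x => Rintegral (@lebesgue_measure R) `[x, 1%R]%classic
              (fun z => nA x * nC z + nB x * nA z + nC x * nB z))
  + Rintegral (@lebesgue_measure R) `[0%R, 1%R]
           (fun x => xlnx (nA x) + xlnx (nB x) + xlnx (nC x)).

From HB Require Import structures.
From mathcomp Require Import all_boot all_order all_algebra.
From mathcomp Require Import all_classical all_reals all_analysis.
From mathcomp Require Import lra.
Import Order.TTheory GRing.Theory Num.Theory.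
Import numFieldNormedType.Exports.
Local Open Scope classical_set_scope.
Local Open Scope ring_scope.

(* Split F = beta * (interaction terms) + (entropy terms), where each interaction
   term is the integral of n_a(x) times the tail integral G_b(x) of n_b over [x, 1].
   The interaction terms are weakly continuous: testing weak convergence against the
   indicator of [x, 1] gives G_{k,b} -> G_b pointwise, hence in L^1 by dominated
   convergence, and that L^1 distance bounds the error of replacing G_{k,b} by G_b.
   The entropy terms are weakly lower semicontinuous by convexity: the tangent of
   y ln y at a = max(n, eta) lies below y ln y, is affine in y so it passes to the
   weak limit, and at y = n it is within eta of n ln n. *)

Lemma le_limn_einf {R : realType} (u v : (\bar R)^nat) :
  (forall n, (u n <= v n)%E) -> (limn_einf u <= limn_einf v)%E.
Proof.
move=> uv; rewrite !limn_einf_lim; apply: lee_lim; [exact: is_cvg_einfs..|].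
apply: nearW => n; apply: le_ereal_inf_tmp => _ [k /= nk <-].
by apply: le_trans (uv k); apply: ereal_inf_lbound; exists k.
Qed.

Lemma cvg_le_limn_einf {R : realType} (u v : R^nat) (l : R) :
  (forall n, u n <= v n) -> u @ \oo --> l -> (l%:E <= limn_einf (EFin \o v))%E.
Proof.
move=> uv ul; have /cvg_limn_einf_sup[<- _] : EFin \o u @ \oo --> l%:E.
  by apply: cvg_EFin => //; exact: nearW.
exact: le_limn_einf.
Qed.

Section Rintegral_facts.
Context d (T : measurableType d) (R : realType) (mu : {measure set T -> \bar R}).

Lemma le_Rintegral_subset (A B : set T) (f : T -> R) :
  measurable A -> measurable B -> A `<=` B -> mu.-integrable B (EFin \o f) ->
  (forall x, B x -> 0 <= f x) -> Rintegral mu A f <= Rintegral mu B f.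
Proof.
move=> mA mB AB intf f0; apply: fine_le.
- exact: integrable_fin_num (integrableS mB mA AB intf).
- exact: integrable_fin_num.
- by apply: ge0_subset_integral => //; case/integrableP: intf.
Qed.

Lemma Rintegral_dominated_cvg0 (D : set T) (hk : nat -> T -> R) (h : T -> R) (M : R) :
  measurable D -> (mu D < +oo)%E ->
  (forall k, measurable_fun D (hk k)) -> measurable_fun D h ->
  (forall k x, D x -> `|hk k x - h x| <= M) -> (forall x, D x -> hk^~ x @ \oo --> h x) ->
  (fun k => Rintegral mu D (fun x => `|hk k x - h x|)) @ \oo --> 0.
Proof.
move=> mD Dfin mhk mh hkM hkh.
have := @dominated_cvg _ _ _ mu D mD
  (fun k x => (`|hk k x - h x|)%:E) (cst 0%:E) (cst M%:E).
rewrite integral0 => dcvg; apply: fine_cvg (dcvg _ _ _ _ _) => //.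
- move=> k; apply/measurable_realfun.measurable_EFinP; apply: measurableT_comp => //.
  exact: measurable_realfun.measurable_funB.
- move=> x Dx; apply: cvg_EFin; first exact: nearW.
  by apply/(norm_cvg0P (fun k => hk k x - h x)); apply/subr_cvg0; exact: hkh.
- apply: (measurable_bounded_integrable (f := cst M)) => //.
  by exists `|M|; split; [rewrite num_real | move=> y My x _; exact: ltW].
- by move=> k x Dx /=; rewrite lee_fin normr_id hkM.
Qed.

End Rintegral_facts.

Section unit_interval.
Context {R : realType}.
Local Notation mu := (@lebesgue_measure R).
Local Notation I := (`[0%R, 1%R]%classic : set R).

Lemma lebesgue_measure01 : mu I = 1%:E.
Proof. by rewrite lebesgue_measure_itv /= lte_fin ltr01 sube0. Qed.

Lemma Rintegral01_cst (c : R) : Rintegral mu I (fun=> c) = c.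
Proof.
by rewrite Rintegral_cst // (_ : fine _ = 1) ?mulr1 //; change (fine (mu I) = 1);
  rewrite lebesgue_measure01.
Qed.

Definition bounded_measurable (f : R -> R) : Prop :=
  measurable_fun I f /\ exists M : R, forall x, I x -> `|f x| <= M.

Lemma bounded_measurable_cst (c : R) : bounded_measurable (fun=> c).
Proof. by split => //; exists `|c|. Qed.

Lemma bounded_measurableD f g : bounded_measurable f -> bounded_measurable g ->
  bounded_measurable (fun x => f x + g x).
Proof.
move=> [mf [M fM]] [mg [N gN]]; split; first exact: measurable_realfun.measurable_funD.
by exists (M + N) => x Ix; rewrite (le_trans (ler_normD _ _)) ?lerD ?fM ?gN.
Qed.

Lemma bounded_measurableM f g : bounded_measurable f -> bounded_measurable g ->
  bounded_measurable (fun x => f x * g x).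
Proof.
move=> [mf [M fM]] [mg [N gN]]; split; first exact: measurable_realfun.measurable_funM.
by exists (M * N) => x Ix; rewrite normrM ler_pM ?fM ?gN.
Qed.

Lemma bounded_measurableN f : bounded_measurable f -> bounded_measurable (fun x => - f x).
Proof.
move=> [mf [M fM]]; split; first exact: measurableT_comp.
by exists M => x Ix; rewrite normrN fM.
Qed.

Lemma bounded_measurable_normr f : bounded_measurable f ->
  bounded_measurable (fun x => `|f x|).
Proof.
move=> [mf [M fM]]; split; first exact: measurableT_comp.
by exists M => x Ix; rewrite normr_id fM.
Qed.

Lemma profile_ge0 f x : profile_comp f -> I x -> 0 <= f x.
Proof. by move=> pf Ix; have /andP[] := pf.2 x Ix. Qed.

Lemma profile_bounded_measurable f : profile_comp f -> bounded_measurable f.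
Proof.
move=> pf; split; first exact: pf.1.
by exists 1 => x Ix; rewrite ger0_norm ?profile_ge0 //; have /andP[] := pf.2 x Ix.
Qed.

Lemma bounded_measurable_integrableS (D : set R) f : measurable D -> D `<=` I ->
  bounded_measurable f -> mu.-integrable D (EFin \o f).
Proof.
move=> mD DI [mf [M fM]]; apply: (@integrableS _ _ _ mu I) => //.
apply: measurable_bounded_integrable => //.
  by change (mu I < +oo)%E; rewrite lebesgue_measure01 ltry.
exists M; split; first by rewrite num_real.
by move=> y My x Ix /=; rewrite (le_trans (fM _ Ix)) ?ltW.
Qed.

Lemma bounded_measurable_integrable f :
  bounded_measurable f -> mu.-integrable I (EFin \o f).
Proof. exact: bounded_measurable_integrableS. Qed.

End unit_interval.

Ltac solve_bounded_measurable :=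
  solve [repeat first
    [ assumption
    | apply: profile_bounded_measurable; assumption
    | apply: bounded_measurableD
    | apply: bounded_measurableM
    | apply: bounded_measurableN
    | apply: bounded_measurable_normr
    | apply: bounded_measurable_cst ]].

Ltac solve_integrable :=
  first [ apply: bounded_measurable_integrable
        | apply: bounded_measurable_integrableS; [exact: measurableI | exact: subIsetl |] ];
  solve_bounded_measurable.

Section tail_integral.
Context {R : realType}.
Local Notation mu := (@lebesgue_measure R).
Local Notation I := (`[0%R, 1%R]%classic : set R).

Definition tail_integral (g : R -> R) (x : R) : R := Rintegral mu (I `&` `[x, 1%R]) g.

Lemma nonincreasing_tail_integral g : profile_comp g ->
  {homo tail_integral g : x y / x <= y >-> y <= x}.
Proof.
move=> pg x y xy; apply: le_Rintegral_subset; try exact: measurableI.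
- by move=> z [Iz /andP[yz z1]]; split => //; rewrite /= in_itv/= (le_trans xy yz).
- solve_integrable.
- by move=> z [Iz _]; exact: profile_ge0.
Qed.

Lemma tail_integral_ge0_le1 g x : profile_comp g -> 0 <= tail_integral g x <= 1.
Proof.
move=> pg; apply/andP; split.
  by apply: Rintegral_ge0 => z [Iz _]; exact: profile_ge0.
rewrite -(Rintegral01_cst 1); apply: (@le_trans _ _ (Rintegral mu I g)).
  apply: le_Rintegral_subset => //; [exact: measurableI|solve_integrable|].
  by move=> z Iz; exact: profile_ge0.
apply: le_Rintegral => //; [solve_integrable|solve_integrable|].
by move=> z Iz; have /andP[] := pg.2 z Iz.
Qed.

Lemma bounded_measurable_tail_integral g : profile_comp g ->
  bounded_measurable (tail_integral g).
Proof.
move=> pg; split.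
  apply: measurable_realfun.nonincreasing_measurable => //.
  exact: nonincreasing_tail_integral.
exists 1 => x _; have /andP[t0 t1] := tail_integral_ge0_le1 g x pg.
by rewrite ger0_norm.
Qed.

Lemma tail_integralE g x :
  tail_integral g x = Rintegral mu I (fun z => g z * \1_(`[x, 1%R]%classic : set R) z).
Proof.
rewrite /tail_integral Rintegral_mkcondr; apply: eq_Rintegral => z _.
by rewrite /patch indicE; case: (z \in _); rewrite ?mulr1 ?mulr0.
Qed.

Lemma tail_integral_cvg gk g : weakL1_cvg gk g ->
  forall x, (fun k => tail_integral (gk k) x) @ \oo --> tail_integral g x.
Proof.
move=> cg x; under eq_fun do rewrite tail_integralE; rewrite tail_integralE.
apply: cg; first exact: (measurable_realfun.measurable_indic (measurable_itv _)).
by exists 1 => z _; rewrite indicE; case: (z \in _); rewrite ?normr1 ?normr0.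
Qed.

End tail_integral.

Section interaction.
Context {R : realType}.
Local Notation mu := (@lebesgue_measure R).
Local Notation I := (`[0%R, 1%R]%classic : set R).

Lemma weak_strong_cvg_Rintegral_mul (fk : nat -> R -> R) f (hk : nat -> R -> R) h :
  (forall k, profile_comp (fk k)) -> weakL1_cvg fk f ->
  (forall k, bounded_measurable (hk k)) -> bounded_measurable h ->
  (fun k => Rintegral mu I (fun x => `|hk k x - h x|)) @ \oo --> 0 ->
  (fun k => Rintegral mu I (fun x => fk k x * hk k x)) @ \oo -->
    Rintegral mu I (fun x => f x * h x).
Proof.
move=> pfk cf bhk bh hkh.
pose A k := Rintegral mu I (fun x => fk k x * hk k x).
pose B k := Rintegral mu I (fun x => fk k x * h x).
have err k : `|A k - B k| <= Rintegral mu I (fun x => `|hk k x - h x|).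
  have pf := pfk k; have bk := bhk k.
  rewrite /A /B -RintegralB //; [|solve_integrable|solve_integrable].
  under eq_Rintegral do rewrite -mulrBr.
  apply: le_trans (le_normr_Rintegral _ _) _ => //; first solve_integrable.
  apply: le_Rintegral => //; [solve_integrable|solve_integrable|].
  move=> x Ix; rewrite normrM ler_piMl //.
  by have /andP[f0 f1] := pf.2 x Ix; rewrite ger0_norm.
have AB0 : (fun k => A k - B k) @ \oo --> 0.
  apply/norm_cvg0P; apply: (squeeze_cvgr _ (cvg_cst 0) hkh).
  by apply: nearW => k; rewrite normr_ge0 err.
have Bf : B @ \oo --> Rintegral mu I (fun x => f x * h x).
  by apply: cf; [exact: bh.1 | exact: bh.2].
change (A @ \oo --> Rintegral mu I (fun x => f x * h x)).
have -> : A = (fun k => A k - B k + B k) by apply: funext => k; rewrite subrK.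
by rewrite -[X in _ --> X]add0r; exact: cvgD.
Qed.

Definition interaction (f g : R -> R) : R :=
  Rintegral mu I (fun x => f x * tail_integral g x).

Lemma interaction_cvg fk f gk g :
  (forall k, profile_comp (fk k)) -> (forall k, profile_comp (gk k)) -> profile_comp g ->
  weakL1_cvg fk f -> weakL1_cvg gk g ->
  (fun k => interaction (fk k) (gk k)) @ \oo --> interaction f g.
Proof.
move=> pfk pgk pg cf cg; apply: weak_strong_cvg_Rintegral_mul => //.
- by move=> k; exact: bounded_measurable_tail_integral.
- exact: bounded_measurable_tail_integral.
apply: (@Rintegral_dominated_cvg0 _ _ _ _ _ _ _ 2) => //.
- by change (mu I < +oo)%E; rewrite lebesgue_measure01 ltry.
- by move=> k; case: (bounded_measurable_tail_integral _ (pgk k)).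
- by case: (bounded_measurable_tail_integral _ pg).
- move=> k x _.
  have /andP[a0 a1] := tail_integral_ge0_le1 (gk k) x (pgk k).
  have /andP[b0 b1] := tail_integral_ge0_le1 g x pg.
  by rewrite ler_norml; apply/andP; split; lra.
- by move=> x _; exact: tail_integral_cvg.
Qed.

End interaction.

Section xlnx.
Context {R : realType}.

Lemma xlnxE (y : R) : xlnx y = y * ln y.
Proof. by rewrite /xlnx; case: eqP => [->|//]; rewrite mul0r. Qed.

Lemma ln_le_subr1 (t : R) : 0 < t -> ln t <= t - 1.
Proof.
by move=> t0; have := @le_ln1Dx R (t - 1); rewrite addrCA subrr addr0; apply; lra.
Qed.

(* [y * (ln a + 1) - a = a ln a + (ln a + 1) (y - a)] is the tangent of [xlnx] at [a]. *)
Definition xlnx_tangent (a y : R) : R := y * (ln a + 1) - a.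

Lemma xlnx_tangent_le (a y : R) : 0 < a -> 0 <= y -> xlnx_tangent a y <= xlnx y.
Proof.
move=> a0 y0; rewrite xlnxE /xlnx_tangent.
have [->|y_neq0] := eqVneq y 0; first by rewrite !mul0r; lra.
have y_gt0 : 0 < y by rewrite lt_neqAle eq_sym y_neq0 y0.
have := ln_le_subr1 _ (divr_gt0 a0 y_gt0); rewrite ln_div ?posrE // => ln_ay.
have : y * (ln a - ln y) <= y * (a / y - 1) by rewrite ler_pM2l.
rewrite mulrBr mulrBr mulr1 mulrCA divff ?mulr1 ?gt_eqF //; lra.
Qed.

Lemma xlnx_le_tangent_max (eta y : R) : 0 < eta -> 0 <= y ->
  xlnx y - eta <= xlnx_tangent (Num.max y eta) y.
Proof.
move=> eta0 y0; rewrite /xlnx_tangent.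
have [eta_le|y_lt] := leP eta y; first by rewrite xlnxE; lra.
rewrite xlnxE; have [->|y_neq0] := eqVneq y 0; first by rewrite !mul0r; lra.
have y_gt0 : 0 < y by rewrite lt_neqAle eq_sym y_neq0 y0.
have : y * ln y <= y * ln eta by rewrite ler_pM2l // ler_ln ?posrE // ltW.
lra.
Qed.

Lemma normr_xlnx_le1 (y : R) : 0 <= y <= 1 -> `|xlnx y| <= 1.
Proof.
move=> /andP[y0 y1]; rewrite xlnxE.
have [->|y_neq0] := eqVneq y 0; first by rewrite mul0r normr0.
have y_gt0 : 0 < y by rewrite lt_neqAle eq_sym y_neq0 y0.
have lny_le0 : ln y <= 0 by exact: ln_le0.
have Vy_gt0 : 0 < y^-1 by rewrite invr_gt0.
have := ln_le_subr1 _ Vy_gt0; rewrite lnV ?posrE // => lnVy.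
have : y * - ln y <= y * (y^-1 - 1) by rewrite ler_pM2l.
rewrite mulrBr mulr1 divff ?gt_eqF // => ylny.
by rewrite ler_norml; apply/andP; split; nra.
Qed.

End xlnx.

Section entropy.
Context {R : realType}.
Local Notation mu := (@lebesgue_measure R).
Local Notation I := (`[0%R, 1%R]%classic : set R).

Definition entropy (f : R -> R) : R := Rintegral mu I (fun x => xlnx (f x)).

Lemma bounded_measurable_xlnx (f : R -> R) :
  profile_comp f -> bounded_measurable (fun x => xlnx (f x)).
Proof.
move=> [mf f01]; split; last by exists 1 => x Ix; exact/normr_xlnx_le1/f01.
apply: (eq_measurable_fun (fun x => f x * ln (f x))) => [x _|]; first by rewrite xlnxE.
apply: measurable_realfun.measurable_funM => //.
exact: measurableT_comp (@measurable_realfun.measurable_ln R) mf.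
Qed.

Lemma entropy_lower_approx (fk : nat -> R -> R) (f : R -> R) (eta : R) :
  (forall k, profile_comp (fk k)) -> profile_comp f -> weakL1_cvg fk f -> 0 < eta <= 1 ->
  exists T : nat -> R, exists2 t : R,
    (forall k, T k <= entropy (fk k)) /\ T @ \oo --> t & entropy f - eta <= t.
Proof.
move=> pfk pf cf /andP[eta_gt0 eta_le1].
have xf := bounded_measurable_xlnx _ pf.
pose a x := Num.max (f x) eta.
have aI x : I x -> eta <= a x <= 1.
  by move=> Ix; have /andP[_ f1] := pf.2 x Ix; rewrite le_max lexx orbT ge_max f1.
have ba : bounded_measurable a.
  split; first exact: measurable_realfun.measurable_maxr pf.1 (measurable_cst _).
  exists 1 => x Ix; have /andP[eta_a a1] := aI x Ix.
  by rewrite ger0_norm // (le_trans (ltW eta_gt0)).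
have bphi : bounded_measurable (fun x => ln (a x) + 1).
  apply: bounded_measurableD (bounded_measurable_cst 1).
  split; first exact: measurableT_comp (@measurable_realfun.measurable_ln R) ba.1.
  exists (- ln eta) => x Ix; have /andP[eta_a a1] := aI x Ix.
  have : ln eta <= ln (a x) by rewrite ler_ln ?posrE // (lt_le_trans eta_gt0).
  by rewrite ler0_norm ?ln_le0 // => ?; lra.
have tangentE g : profile_comp g -> Rintegral mu I (fun x => xlnx_tangent (a x) (g x)) =
    Rintegral mu I (fun x => g x * (ln (a x) + 1)) - Rintegral mu I a.
  by move=> pg; rewrite -RintegralB //; solve_integrable.
exists (fun k => Rintegral mu I (fun x => xlnx_tangent (a x) (fk k x))).
exists (Rintegral mu I (fun x => xlnx_tangent (a x) (f x))); first split.
- move=> k; have pk := pfk k; have xk := bounded_measurable_xlnx _ pk.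
  apply: le_Rintegral => //; [by rewrite /xlnx_tangent; solve_integrable|solve_integrable|].
  move=> x Ix; apply: xlnx_tangent_le; last exact: profile_ge0.
  by have /andP[eta_a _] := aI x Ix; exact: lt_le_trans eta_a.
- rewrite tangentE //; under eq_fun do rewrite tangentE //.
  by apply: cvgB (cvg_cst _); apply: cf; [exact: bphi.1 | exact: bphi.2].
- rewrite -[X in _ - X]Rintegral01_cst /entropy -RintegralB //; [|solve_integrable..].
  apply: le_Rintegral => //; [solve_integrable|by rewrite /xlnx_tangent; solve_integrable|].
  by move=> x Ix; apply: xlnx_le_tangent_max => //; exact: profile_ge0.
Qed.

End entropy.

Section free_energy.
Context {R : realType}.
Local Notation mu := (@lebesgue_measure R).
Local Notation I := (`[0%R, 1%R]%classic : set R).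
Variables (nA nB nC : R -> R).
Hypotheses (pA : profile_comp nA) (pB : profile_comp nB) (pC : profile_comp nC).

Lemma inner_integralE x : I x ->
  Rintegral mu `[x, 1%R]%classic (fun z => nA x * nC z + nB x * nA z + nC x * nB z) =
  nA x * tail_integral nC x + nB x * tail_integral nA x + nC x * tail_integral nB x.
Proof.
rewrite /= in_itv /= => /andP[x0 _]; have -> : `[x, 1%R]%classic = I `&` `[x, 1%R].
  apply/seteqP; split => [z xz | z []//]; split => //.
  by move: xz; rewrite /= !in_itv /= => /andP[xz ->]; rewrite (le_trans x0 xz).
have mIx : measurable (I `&` `[x, 1%R]) by exact: measurableI.
by rewrite !RintegralD // ?RintegralZl //; solve_integrable.
Qed.

Lemma free_energyE beta : free_energy beta nA nB nC =
  beta * (interaction nA nC + interaction nB nA + interaction nC nB) +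
  (entropy nA + entropy nB + entropy nC).
Proof.
have xA := bounded_measurable_xlnx _ pA; have xB := bounded_measurable_xlnx _ pB.
have xC := bounded_measurable_xlnx _ pC.
have tA := bounded_measurable_tail_integral _ pA.
have tB := bounded_measurable_tail_integral _ pB.
have tC := bounded_measurable_tail_integral _ pC.
rewrite /free_energy /entropy /interaction; congr (_ * _ + _).
  under eq_Rintegral => x Ix do rewrite (inner_integralE _ (set_mem Ix)).
  by rewrite !RintegralD //; solve_integrable.
by rewrite !RintegralD //; solve_integrable.
Qed.

End free_energy.

Theorem lemma10p1 (R : realType) (beta : R) (hbeta : 0 < beta)
  (nA nB nC : R -> R) (nkA nkB nkC : nat -> R -> R)
  (hA : profile_comp nA) (hB : profile_comp nB) (hC : profile_comp nC)
  (hkA : forall k, profile_comp (nkA k)) (hkB : forall k, profile_comp (nkB k))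
  (hkC : forall k, profile_comp (nkC k))
  (cA : weakL1_cvg nkA nA) (cB : weakL1_cvg nkB nB) (cC : weakL1_cvg nkC nC) :
  ((free_energy beta nA nB nC)%:E <=
     limn_einf (fun k => (free_energy beta (nkA k) (nkB k) (nkC k))%:E))%E.
Proof.
apply/lee_subgt0Pr => e e_gt0.
pose eta := Num.min (e / 3) 1.
have eta_e : 3 * eta <= e.
  have : eta <= e / 3 by rewrite /eta ge_min lexx.
  lra.
have etaI : 0 < eta <= 1 by rewrite /eta lt_min ltr01 divr_gt0 // ge_min lexx orbT.
have [TA [tA [TA_le TA_cvg] tA_ge]] := entropy_lower_approx _ _ _ hkA hA cA etaI.
have [TB [tB [TB_le TB_cvg] tB_ge]] := entropy_lower_approx _ _ _ hkB hB cB etaI.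
have [TC [tC [TC_le TC_cvg] tC_ge]] := entropy_lower_approx _ _ _ hkC hC cC etaI.
pose U k := beta * (interaction (nkA k) (nkC k) + interaction (nkB k) (nkA k) +
  interaction (nkC k) (nkB k)) + (TA k + TB k + TC k).
have U_cvg : U @ \oo --> beta * (interaction nA nC + interaction nB nA +
    interaction nC nB) + (tA + tB + tC).
  apply: cvgD; last by apply: cvgD; first apply: cvgD.
  by apply: cvgM; [exact: cvg_cst | apply: cvgD; first apply: cvgD; exact: interaction_cvg].
have U_le k : U k <= free_energy beta (nkA k) (nkB k) (nkC k).
  by rewrite free_energyE // lerD2l !lerD.
apply: le_trans (cvg_le_limn_einf _ _ _ U_le U_cvg).
by rewrite lee_fin free_energyE //; lra.
Qed.
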